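(* In the random-feature Dense Associative Memory procedure described in the context, the subroutine GradComp$(\tau,\mathbf{T},\mathbf{x})$, which on input a seed $\tau$, a distributed memory vector $\mathbf{T}\in\mathbb{R}^Y$ and an input $\mathbf{x}\in\mathbb{R}^D$ returns the approximate energy gradient $\nabla_{\mathbf{x}}\hat E(\mathbf{x})$, takes $O(D(Y+D))$ time and $O(D+Y)$ peak memory.
   Context: Setting: $\mathbf{g}:\mathbb{R}^D\to\mathbb{R}^D$ is a differentiable vector function, $Q$ a differentiable scalar function, and $\boldsymbol{\varphi}:\mathbb{R}^D\to\mathbb{R}^Y$ a random feature map consisting of $Y$ random features $\varphi_\alpha$, each determined by a random projection vector $\boldsymbol{\omega}^\alpha\in\mathbb{R}^D$ and evaluated as a scalar function of $\langle\boldsymbol{\omega}^\alpha,\mathbf{x}\rangle$; the random vectors are generated from a random number generator with fixed seed $\tau$ and regenerated on demand. Given memories $\boldsymbol{\xi}^\mu$, the distributed memory is $\mathbf{T}=\sum_\mu\boldsymbol{\varphi}(\boldsymbol{\xi}^\mu)$ and the approximate energy is $\hat E(\mathbf{x})=-Q(\langle\mathbf{T},\boldsymbol{\varphi}(\mathbf{g}(\mathbf{x}))\rangle)$, with gradient $\nabla_{\mathbf{x}}\hat E = -Q'(\langle\boldsymbol{\varphi}(\mathbf{g}(\mathbf{x})),\mathbf{T}\rangle)\,\big(\frac{d\boldsymbol{\varphi}(\mathbf{z})}{d\mathbf{z}}\big|_{\mathbf{z}=\mathbf{g}(\mathbf{x})}^\top\mathbf{T}\big)\frac{d\mathbf{g}(\mathbf{x})}{d\mathbf{x}}$.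 Subroutine RF$(\tau,\boldsymbol{\xi})$ resets the generator to seed $\tau$ and returns $(\varphi_\alpha(\boldsymbol{\xi}))_{\alpha=1}^Y$. Subroutine GradComp$(\tau,\mathbf{T},\mathbf{x})$: $\mathbf{p}\gets\mathrm{RF}(\tau,\mathbf{g}(\mathbf{x}))$; $\mathbf{z}\gets 0_D$; for $i=1,\dots,D$: compute $\mathbf{u}\gets \partial\boldsymbol{\varphi}(\mathbf{y})/\partial y_i|_{\mathbf{y}=\mathbf{g}(\mathbf{x})}\in\mathbb{R}^Y$ and set $z_i\gets\langle\mathbf{u},\mathbf{T}\rangle$; $\mathbf{z}'\gets 0_D$; for $i=1,\dots,D$: compute $\mathbf{y}\gets\partial\mathbf{g}(\mathbf{x})/\partial x_i\in\mathbb{R}^D$ and set $z'_i\gets\langle\mathbf{y},\mathbf{z}\rangle$; compute $q\gets -Q'(\langle\mathbf{T},\mathbf{p}\rangle)$; return $q\,\mathbf{z}'$. Complexity counts arithmetic operations and stored real numbers, with sampling a scalar random number, evaluating scalar elementary functions, and evaluating an entry of $\mathbf{g}$ or of its Jacobian at unit cost. *)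

From HB Require Import structures.
From mathcomp Require Import all_boot all_order all_algebra.
From mathcomp Require Import reals.
Set Implicit Arguments. Unset Strict Implicit. Unset Printing Implicit Defensive.
Import Order.TTheory GRing.Theory Num.Theory.
Local Open Scope ring_scope.

(* Cost monad: counts unit-cost operations and stored real numbers.   *)
(* live = number of real numbers currently stored (arrays)            *)
Record cstate := CState { ops : nat; live : nat; peak : nat }.

Definition M (A : Type) := cstate -> A * cstate.
Definition ret {A} (a : A) : M A := fun s => (a, s).
Definition bind {A B} (m : M A) (f : A -> M B) : M B :=
  fun s => let (a, s') := m s in f a s'.
Notation "'mlet' x := m 'in' k" := (bind m (fun x => k))
  (at level 200, x name, m at level 100, k at level 200).

Definition tick : M unit :=
  fun s => (tt, CState (ops s).+1 (live s) (peak s)).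
Definition alloc (n : nat) : M unit :=
  fun s => (tt, CState (ops s) (live s + n) (maxn (peak s) (live s + n))).
Definition free (n : nat) : M unit :=
  fun s => (tt, CState (ops s) (live s - n) (peak s)).

Definition prim {A} (a : A) : M A := mlet _ := tick in ret a.

Definition run {A} (m : M A) : A * cstate := m (CState 0 0 0).

Section Model.
Variable R : realType.

Definition addM (a b : R) : M R := prim (a + b).
Definition mulM (a b : R) : M R := prim (a * b).
Definition oppM (a : R) : M R := prim (- a).

Fixpoint mapM {A B} (f : A -> M B) (l : seq A) : M (seq B) :=
  match l with
  | [::] => ret [::]
  | a :: l' => mlet b := f a in mlet bs := mapM f l' in ret (b :: bs)
  end.

Fixpoint sumL {A} (f : A -> M R) (l : seq A) (acc : R) : M R :=
  match l with
  | [::] => ret acc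
  | a :: l' => mlet v := f a in mlet acc' := addM acc v in sumL f l' acc'
  end.

Definition sumOrd (n : nat) (f : 'I_n -> M R) : M R := sumL f (enum 'I_n) 0.

Definition tabulate (n : nat) (f : 'I_n -> M R) : M 'rV[R]_n :=
  mlet _ := alloc n in
  mlet l := mapM f (enum 'I_n) in
  ret (\row_i nth 0 l i).

(* The data of the procedure (unit-cost oracles).
   - rf_omega tau a j : the j-th entry of the random projection vector
     omega^a generated by the random number generator with seed tau
     (regenerated on demand; drawing one scalar has unit cost);
   - rf_h a : the scalar function with phi_a(x) = rf_h a <omega^a, x>;
   - rf_dh a : its derivative (used for d phi / d z);
   - rf_g : the vector function g, rf_Jg x j i = d g_j / d x_i (x);
   - rf_dQ : Q'. *)
Record RFModel (D Y : nat) := {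
  rf_omega : nat -> 'I_Y -> 'I_D -> R;
  rf_h : 'I_Y -> R -> R;
  rf_dh : 'I_Y -> R -> R;
  rf_g : 'rV[R]_D -> 'rV[R]_D;
  rf_Jg : 'rV[R]_D -> 'M[R]_D;
  rf_dQ : R -> R
}.

Variables (D Y : nat) (P : RFModel D Y).

Definition sample (tau : nat) (a : 'I_Y) (j : 'I_D) : M R := prim (rf_omega P tau a j).
Definition evalh (a : 'I_Y) (t : R) : M R := prim (rf_h P a t).
Definition evaldh (a : 'I_Y) (t : R) : M R := prim (rf_dh P a t).
Definition evaldQ (t : R) : M R := prim (rf_dQ P t).
Definition evalg (x : 'rV[R]_D) (j : 'I_D) : M R := prim (rf_g P x 0 j).
Definition evalJ (x : 'rV[R]_D) (j i : 'I_D) : M R := prim (rf_Jg P x j i).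

(* RF(tau, y): regenerate omega^1..omega^Y from seed tau, one scalar at a
   time (omega^a is consumed, not stored), computing the projections
   s_a = <omega^a, y> and the features p_a = phi_a(y) = h_a(s_a). *)
Definition RF_core (tau : nat) (y : 'rV[R]_D) : M ('rV[R]_Y * 'rV[R]_Y) :=
  mlet s := tabulate (fun a : 'I_Y =>
              sumOrd (fun j : 'I_D => mlet w := sample tau a j in mulM w (y 0 j))) in
  mlet p := tabulate (fun a : 'I_Y => evalh a (s 0 a)) in
  ret (s, p).

Definition RF (tau : nat) (y : 'rV[R]_D) : M 'rV[R]_Y :=
  mlet sp := RF_core tau y in ret sp.2.

Definition GradComp (tau : nat) (T : 'rV[R]_Y) (x : 'rV[R]_D) : M 'rV[R]_D :=
  mlet y := tabulate (fun j : 'I_D => evalg x j) in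
  mlet sp := RF_core tau y in
  let s := sp.1 in let p := sp.2 in
  (* z_i = < d phi(y) / d y_i , T >, with (d phi / d y_i)_a = h_a'(s_a) omega^a_i *)
  mlet z := tabulate (fun i : 'I_D =>
     mlet u := tabulate (fun a : 'I_Y =>
                 mlet d := evaldh a (s 0 a) in
                 mlet w := sample tau a i in mulM d w) in
     mlet zi := sumOrd (fun a : 'I_Y => mulM (u 0 a) (T 0 a)) in
     mlet _ := free Y in ret zi) in
  mlet z' := tabulate (fun i : 'I_D =>
     mlet yv := tabulate (fun j : 'I_D => evalJ x j i) in
     mlet zi := sumOrd (fun j : 'I_D => mulM (yv 0 j) (z 0 j)) in
     mlet _ := free D in ret zi) in
  mlet tp := sumOrd (fun a : 'I_Y => mulM (T 0 a) (p 0 a)) in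
  mlet dq := evaldQ tp in
  mlet q := oppM dq in
  tabulate (fun i : 'I_D => mulM q (z' 0 i)).

(* The approximate energy gradient
   - Q'(<phi(g x), T>) (d phi/dz|_{g x}^T T) (d g / d x), written out. *)
Definition grad_formula (tau : nat) (T : 'rV[R]_Y) (x : 'rV[R]_D) : 'rV[R]_D :=
  let s := fun a : 'I_Y => \sum_(j < D) rf_omega P tau a j * rf_g P x 0 j in
  \row_(i < D)
    (- rf_dQ P (\sum_(a < Y) T 0 a * rf_h P a (s a)) *
     \sum_(j < D) rf_Jg P x j i *
        \sum_(a < Y) rf_dh P a (s a) * rf_omega P tau a j * T 0 a).

End Model.

(* Costs compose along the program: a running sum of n terms adds n additions
   to the cost of its terms, and a tabulated vector of n entries stores n reals
   on top of the scratch space of a single entry, because GradComp frees the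
   column u (of length Y) and the Jacobian column (of length D) before
   computing the next entry.  Counting gives at most 8DY + 3D^2 + 2D + 3Y + 2
   operations and a peak of at most 4D + 3Y stored reals, dominated by the D inner
   products of length Y with T and the D inner products of length D with the
   columns of the Jacobian of g. *)
From Pilot Require Import Defs.
From HB Require Import structures.
From mathcomp Require Import all_boot all_order all_algebra.
From mathcomp Require Import reals zify.
Set Implicit Arguments. Unset Strict Implicit. Unset Printing Implicit Defensive.
Import GRing.Theory.
Local Open Scope ring_scope.

Definition costs {A} (m : M A) (a : A) (k d p : nat) :=
  forall s, (live s <= peak s)%N ->
  [/\ (m s).1 = a, (ops (m s).2 <= ops s + k)%N, live (m s).2 = (live s + d)%N,
      (peak (m s).2 <= maxn (peak s) (live s + p))%N & (live (m s).2 <= peak (m s).2)%N].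

Lemma costs_ret A (a : A) : costs (ret a) a 0 0 0.
Proof. by move=> [o l p] /= lp; split => //=; lia. Qed.

Lemma costs_prim A (a : A) : costs (prim a) a 1 0 0.
Proof. by move=> [o l p] /= lp; split => //=; lia. Qed.

Lemma costs_alloc n : costs (alloc n) tt 0 n n.
Proof. by move=> [o l p] /= lp; split => //=; lia. Qed.

Lemma costs_conseq A (m : M A) a a' k k' d d' p p' :
  costs m a k d p -> a = a' -> (k <= k')%N -> d = d' -> (p <= p')%N ->
  costs m a' k' d' p'.
Proof.
move=> mP <- kk' <- pp' s /mP[-> ? ? ? ?].
by split => //; lia.
Qed.

Lemma costs_bind A B (m : M A) (f : A -> M B) a b k1 d1 p1 k2 d2 p2 :
  costs m a k1 d1 p1 -> costs (f a) b k2 d2 p2 ->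
  costs (bind m f) b (k1 + k2) (d1 + d2) (maxn p1 (d1 + p2)).
Proof.
move=> mP fP s /mP; rewrite /bind.
case: (m s) => a' s1 /= [-> ? ? ?] /fP.
by case: (f a s1) => b' s2 /= [-> ? ? ? ?]; split => //; lia.
Qed.

(* The truncated subtraction in [free n] is exact because [m] has just
   allocated [n] reals. *)
Lemma costs_scoped A B (m : M A) (f : A -> M B) a b k1 n p1 k2 p2 :
  costs m a k1 n p1 -> costs (f a) b k2 0 p2 ->
  costs (mlet x := m in mlet y := f x in mlet _ := Defs.free n in ret y) b
        (k1 + k2) 0 (maxn p1 (n + p2)).
Proof.
move=> mP fP s /mP; rewrite /bind.
case: (m s) => a' s1 /= [-> ? ? ?] /fP.
by case: (f a s1) => b' s2 /= [-> ? ? ? ?]; split => //=; lia.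
Qed.

Lemma costs_mapM A B (f : A -> M B) (g : A -> B) k p (l : seq A) :
  (forall x, costs (f x) (g x) k 0 p) -> costs (mapM f l) (map g l) (k * size l) 0 p.
Proof.
move=> fP; elim: l => [|x l IHl] /=.
  exact: costs_conseq (costs_ret _) _ _ _ _.
eapply costs_conseq.
- by eapply costs_bind; [exact: fP | eapply costs_bind; [exact: IHl | exact: costs_ret]].
all: by [|lia].
Qed.

Lemma costs_sumL (R : realType) A (f : A -> M R) (g : A -> R) k (l : seq A) acc :
  (forall x, costs (f x) (g x) k 0 0) ->
  costs (sumL f l acc) (acc + \sum_(x <- l) g x) ((k + 1) * size l) 0 0.
Proof.
move=> fP; elim: l acc => [|x l IHl] acc /=.
  by rewrite big_nil addr0; exact: costs_conseq (costs_ret _) _ _ _ _.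
eapply costs_conseq.
- by eapply costs_bind; [exact: fP | eapply costs_bind; [exact: costs_prim | exact: IHl]].
all: by rewrite ?big_cons ?addrA //; lia.
Qed.

Lemma costs_sumOrd (R : realType) n (f : 'I_n -> M R) (g : 'I_n -> R) k :
  (forall i, costs (f i) (g i) k 0 0) ->
  costs (sumOrd f) (\sum_(i < n) g i) ((k + 1) * n) 0 0.
Proof.
move=> fP; have := costs_sumL (enum 'I_n) 0 fP.
by rewrite add0r size_enum_ord big_enum.
Qed.

Lemma costs_tabulate (R : realType) n (f : 'I_n -> M R) (g : 'I_n -> R) k p :
  (forall i, costs (f i) (g i) k 0 p) ->
  costs (tabulate f) (\row_i g i) (k * n) n (n + p).
Proof.
move=> fP; eapply costs_conseq.
- eapply costs_bind; [exact: costs_alloc | cbv beta].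
  by eapply costs_bind; [exact: (costs_mapM _ fP) | exact: costs_ret].
- by apply/rowP => i; rewrite !mxE (nth_map i) ?size_enum_ord // nth_ord_enum.
all: by rewrite ?size_enum_ord; lia.
Qed.

Ltac costs_side := first [exact: leqnn | reflexivity | lia].

(* A scoped block is also a [bind], so [costs_scoped] must be tried before
   the generic rule; all values and counts are found by unification. *)
Ltac costs_solve :=
  lazymatch goal with
  | |- costs (tabulate _) _ _ _ _ => apply: costs_tabulate => ?; costs_solve
  | |- costs (sumOrd _) _ _ _ _ => apply: costs_sumOrd => ?; costs_solve
  | |- costs (ret _) _ _ _ _ => exact: costs_ret
  | |- costs (bind _ _) _ _ _ _ =>
      first [ eapply costs_scoped; [costs_solve | cbv beta; costs_solve]
            | eapply costs_conseq;
              [ eapply costs_bind; [costs_solve | cbv beta; costs_solve]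
              | reflexivity | costs_side .. ] ]
  | |- _ => exact: costs_prim
  end.

Lemma costs_GradComp (R : realType) D Y (P : RFModel R D Y) tau T x :
  costs (GradComp P tau T x) (grad_formula P tau T x)
        (8 * D * Y + 3 * D * D + 2 * D + 3 * Y + 2) (4 * D + 2 * Y) (4 * D + 3 * Y).
Proof.
eapply costs_conseq; first by rewrite /GradComp /RF_core; costs_solve.
- apply/rowP => i; rewrite !mxE /=.
  have proj_gE a : \sum_(j < D) rf_omega P tau a j * (\row_k rf_g P x 0 k) 0 j
                   = \sum_(j < D) rf_omega P tau a j * rf_g P x 0 j.
    by apply: eq_bigr => j _; rewrite mxE.
  congr (- rf_dQ P _ * _); first by apply: eq_bigr => a _; rewrite !mxE proj_gE.
  apply: eq_bigr => j _; rewrite !mxE; congr (_ * _).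
  by apply: eq_bigr => a _; rewrite !mxE proj_gE.
all: nia.
Qed.

Theorem proposition4 :
  exists c : nat,
    forall (R : realType) (D Y : nat), (0 < D)%N -> (0 < Y)%N ->
    forall (P : RFModel R D Y) (tau : nat) (T : 'rV[R]_Y) (x : 'rV[R]_D),
      let res := run (GradComp P tau T x) in
      [/\ res.1 = grad_formula P tau T x,
          (ops res.2 <= c * (D * (Y + D)))%N
        & (peak res.2 <= c * (D + Y))%N].
Proof.
exists 13 => R D Y D_gt0 Y_gt0 P tau T x /=.
have [] := costs_GradComp P tau T x (leqnn 0 : live (CState 0 0 0) <= _)%N.
rewrite /run /= => -> ops_le _ peak_le _.
by split => //; nia.
Qed.
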